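(* Assume the Nested Logit model with outside option described in the context satisfies Assumptions 1 and 2, and let $S \in \mathcal{S}$. Then for every $i \in S$: (I) if $N(i) \subseteq S$, then $\mathsf{BF}(i,S) = \mathsf{BF}(0,S)$; (II) if $N(i) \not\subseteq S$, then $\mathsf{BF}(i,S) > \mathsf{BF}(0,S)$, and moreover for every $j \in S \setminus \{i\}$ we have $N(i) = N(j)$ if and only if $\mathsf{BF}(i,S) = \mathsf{BF}(j,S)$. Consequently: (a) if $i \in S$ and $\mathsf{BF}(i,S) = \mathsf{BF}(0,S)$, then $N(i) \neq N(k)$ for all $k \notin S$; (b) if $i,j \in S$ and $\mathsf{BF}(i,S) = \mathsf{BF}(j,S) > \mathsf{BF}(0,S)$, then $N(i) = N(j)$; (c) if $i,j \in S$ and $\mathsf{BF}(i,S) \neq \mathsf{BF}(j,S)$, then $N(i) \neq N(j)$.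
   Context: Items: $[n]=\{1,\dots,n\}$ with $n\ge 2$. Experiment design: fix an integer base $b \ge 2$, let $L = \lceil \log_b n \rceil$, and fix an injective map $\sigma: [n] \to \{0,\dots,b-1\}^L$, writing $\sigma_\ell(i)$ for its $\ell$-th coordinate. For $\ell \in \{1,\dots,L\}$ and $d \in \{0,\dots,b-1\}$ let $S_{\ell,-d} = \{i \in [n] : \sigma_\ell(i) \neq d\}$, and let $\mathcal{S} = \{S_{\ell,-d}\}_{\ell,d}$ (the experimental assortments); the control assortment $[n]$ is also offered. Nested Logit model with outside option: $\mathcal{N}$ is a partition of $[n]$ into nonempty disjoint nests; $N(i)$ denotes the nest containing $i$. Each item has a weight $v_i > 0$, each nest $N$ a parameter $\lambda_N \in [0,1]$, and each nest with $\lambda_N = 0$ an additional weight $v_N > 0$. For $S \subseteq [n]$ set $v_N(S) = (\sum_{i \in N \cap S} v_i)^{\lambda_N}$ if $\lambda_N \in (0,1]$ and $v_N(S) = v_N \mathbf{1}(N \cap S \neq \emptyset)$ if $\lambda_N = 0$. For $i \in S$, $\phi(i,S) = \frac{v_{N(i)}(S)}{1 + \sum_{N \in \mathcal{N}} v_N(S)} \cdot \frac{v_i}{\sum_{j \in N(i) \cap S} v_j}$, and the outside option $0$ has $\phi(0,S) = \frac{1}{1 + \sum_{N \in \mathcal{N}} v_N(S)}$. Boost factor: for $S \in \mathcal{S}$ and $i \in S \cup \{0\}$, $\mathsf{BF}(i,S) = \phi(i,S)/\phi(i,[n])$. Multiplier: $\mathsf{Mult}(N,S) = \left(\frac{\sum_{j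 \in N} v_j}{\sum_{j \in N \cap S} v_j}\right)^{1-\lambda_N}$. Assumption 1: $\lambda_N = 1$ if and only if $|N| = 1$. Assumption 2: for every $S \in \mathcal{S}$ and every two distinct nests $N \neq N'$ with $\emptyset \neq N \cap S \neq N$ and $\emptyset \neq N' \cap S \neq N'$, we have $\mathsf{Mult}(N,S) \neq \mathsf{Mult}(N',S)$. *)

From HB Require Import structures.
From mathcomp Require Import all_boot all_order all_algebra.
From mathcomp Require Import reals exp.
Set Implicit Arguments. Unset Strict Implicit. Unset Printing Implicit Defensive.
Import Order.TTheory GRing.Theory Num.Theory.
Local Open Scope ring_scope.

(* Items [n] are represented by 'I_n (0-based); the outside option is
   handled separately (phi0, BF0). *)

Definition Lb (b n : nat) : nat := up_log b n.

Definition Sexp (n b : nat) (sigma : 'I_n -> {ffun 'I_(Lb b n) -> 'I_b})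
  (l : 'I_(Lb b n)) (d : 'I_b) : {set 'I_n} :=
  [set i | sigma i l != d].

Definition in_Sfam (n b : nat) (sigma : 'I_n -> {ffun 'I_(Lb b n) -> 'I_b})
  (S : {set 'I_n}) : Prop :=
  exists (l : 'I_(Lb b n)) (d : 'I_b), S = Sexp sigma l d.

Section NL.
Variables (R : realType) (n : nat).
(* P : the partition into nests, v : item weights, lam : nest parameters,
   vN : extra nest weights (used when lam N = 0). *)
Variables (P : {set {set 'I_n}}) (v : 'I_n -> R) (lam : {set 'I_n} -> R)
          (vN : {set 'I_n} -> R).

Definition vNS (N S : {set 'I_n}) : R :=
  if lam N == 0 then vN N * (N :&: S != set0)%:R
  else (\sum_(j in N :&: S) v j) `^ (lam N).

Definition denom (S : {set 'I_n}) : R := 1 + \sum_(N in P) vNS N S.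

(* choice probability of item i in S; N(i) = pblock P i *)
Definition phi (i : 'I_n) (S : {set 'I_n}) : R :=
  vNS (pblock P i) S / denom S * (v i / \sum_(j in pblock P i :&: S) v j).

Definition phi0 (S : {set 'I_n}) : R := 1 / denom S.

Definition BF (i : 'I_n) (S : {set 'I_n}) : R := phi i S / phi i [set: 'I_n].
Definition BF0 (S : {set 'I_n}) : R := phi0 S / phi0 [set: 'I_n].

Definition Mult (N S : {set 'I_n}) : R :=
  ((\sum_(j in N) v j) / (\sum_(j in N :&: S) v j)) `^ (1 - lam N).

Definition NL_model : Prop :=
  partition P [set: 'I_n] /\
  (forall i, 0 < v i) /\
  (forall N, N \in P -> 0 <= lam N <= 1) /\
  (forall N, N \in P -> lam N = 0 -> 0 < vN N).

Definition Assumption1 : Prop :=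
  forall N, N \in P -> (lam N = 1 <-> #|N| = 1%N).

Definition Assumption2 (b : nat) (sigma : 'I_n -> {ffun 'I_(Lb b n) -> 'I_b}) : Prop :=
  forall S, in_Sfam sigma S ->
  forall N N', N \in P -> N' \in P -> N != N' ->
    N :&: S != set0 -> N :&: S != N ->
    N' :&: S != set0 -> N' :&: S != N' ->
    Mult N S != Mult N' S.
End NL.

From HB Require Import structures.
From mathcomp Require Import all_boot all_order all_algebra.
From mathcomp Require Import reals exp ring.
Import Order.TTheory GRing.Theory Num.Theory.
Local Open Scope ring_scope.

(* The boost factor of an offered item factors as BF(i,S) = BF(0,S) * Mult(N(i),S):
   the common denominators give BF(0,S), and the within-nest terms collapse to
   the multiplier.  The multiplier is 1 when the whole nest N(i) is offered; when
   only part of it is offered the nest is not a singleton, so 1 - lam_N > 0 by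
   Assumption 1 and the multiplier exceeds 1.  Assumption 2 makes the multipliers
   of distinct partially offered nests distinct, so boost factors above BF(0,S)
   determine the nest. *)

Set Implicit Arguments. Unset Strict Implicit. Unset Printing Implicit Defensive.

Section Multiplier.
Variables (R : realType) (n : nat) (v : 'I_n -> R) (lam : {set 'I_n} -> R).
Hypothesis v_gt0 : forall i, 0 < v i.

Lemma sum_weight_gt0 (A : {set 'I_n}) i : i \in A -> 0 < \sum_(j in A) v j.
Proof.
move=> iA; rewrite (bigD1 i) //=; apply: (lt_le_trans (v_gt0 i)).
by rewrite lerDl; apply: sumr_ge0 => j _; exact: ltW.
Qed.

Lemma Mult_subset (N S : {set 'I_n}) i : i \in N -> N \subset S -> Mult v lam N S = 1.
Proof.
move=> iN NS; rewrite /Mult (setIidPl NS) divff ?powR1 //.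
by rewrite gt_eqF // (sum_weight_gt0 iN).
Qed.

Lemma Mult_gt1 (N S : {set 'I_n}) :
  lam N < 1 -> N :&: S != set0 -> ~~ (N \subset S) -> 1 < Mult v lam N S.
Proof.
move=> lam_lt1 /set0Pn[i iNS] /subsetPn[k kN kS].
have kNS : k \in N :\: S by rewrite inE kN kS.
have a_gt0 := sum_weight_gt0 iNS; have e_gt0 := sum_weight_gt0 kNS.
rewrite /Mult (big_setID S) /=.
set a := \sum_(j in N :&: S) v j in a_gt0 *.
set e := \sum_(j in N :\: S) v j in e_gt0 *.
have ratio_gt1 : 1 < (a + e) / a by rewrite ltr_pdivlMr // mul1r ltrDl.
have exp_gt0 : 0 < 1 - lam N by rewrite subr_gt0.
have := gt0_ltr_powR exp_gt0 _ _ ratio_gt1; rewrite powR1; apply.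
- by rewrite qualifE /= ler01.
- by rewrite qualifE /= ltW // (lt_trans ltr01).
Qed.

End Multiplier.

Section NestedLogit.
Variables (R : realType) (n : nat) (P : {set {set 'I_n}}) (v : 'I_n -> R)
  (lam : {set 'I_n} -> R) (vN : {set 'I_n} -> R).
Hypothesis model : NL_model P v lam vN.

Lemma cover_nests : cover P = [set: 'I_n].
Proof. by case: model => /and3P[/eqP]. Qed.

Lemma pblock_nest i : pblock P i \in P.
Proof. by apply: pblock_mem; rewrite cover_nests inE. Qed.

Lemma mem_pblock_nest i : i \in pblock P i.
Proof. by rewrite mem_pblock cover_nests inE. Qed.

Lemma weight_gt0 i : 0 < v i.
Proof. by case: model => _ []. Qed.

Lemma vNS_ge0 (N S : {set 'I_n}) : N \in P -> 0 <= vNS v lam vN N S.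
Proof.
move=> NP; rewrite /vNS; case: ifP => [/eqP lam0|_]; last exact: powR_ge0.
have [_ [_ [_ vN_gt0]]] := model.
by rewrite mulr_ge0 // ltW // vN_gt0.
Qed.

Lemma vNS_gt0 (N S : {set 'I_n}) i : N \in P -> i \in N :&: S -> 0 < vNS v lam vN N S.
Proof.
move=> NP iNS; rewrite /vNS; case: ifP => [/eqP lam0|_].
  have -> : N :&: S != set0 by apply/set0Pn; exists i.
  have [_ [_ [_ vN_gt0]]] := model.
  by rewrite mulr1 vN_gt0.
exact/powR_gt0/(sum_weight_gt0 weight_gt0 iNS).
Qed.

Lemma denom_gt0 (S : {set 'I_n}) : 0 < denom P v lam vN S.
Proof.
rewrite /denom ltr_pwDl //.
by apply: sumr_ge0 => N NP; exact: vNS_ge0.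
Qed.

Lemma BF0_gt0 (S : {set 'I_n}) : 0 < BF0 P v lam vN S.
Proof. by rewrite /BF0 /phi0 !divr_gt0 ?denom_gt0. Qed.

Lemma vNS_ratio_Mult (N S : {set 'I_n}) i : N \in P -> i \in N :&: S ->
  vNS v lam vN N S / vNS v lam vN N [set: 'I_n]
    * ((\sum_(j in N) v j) / \sum_(j in N :&: S) v j) = Mult v lam N S.
Proof.
move=> NP iNS; have iN : i \in N by move: iNS; rewrite inE => /andP[].
have a_gt0 := sum_weight_gt0 weight_gt0 iNS.
have b_gt0 := sum_weight_gt0 weight_gt0 iN.
rewrite /vNS /Mult setIT; case: ifP => [/eqP lam0|_].
  have -> : N :&: S != set0 by apply/set0Pn; exists i.
  have -> : N != set0 by apply/set0Pn; exists i.
  have [_ [_ [_ /(_ N NP lam0) vN_gt0]]] := model.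
  by rewrite lam0 subr0 powRr1 ?divr_ge0 ?ltW // mulr1 mulfV ?mul1r // gt_eqF.
set a := \sum_(j in N :&: S) v j in a_gt0 *.
set b := \sum_(j in N) v j in b_gt0 *.
have ratio_gt0 : 0 < b / a by rewrite divr_gt0.
rewrite powRB; last by apply/implyP => _; rewrite gt_eqF.
rewrite powRr1 ?ltW //.
have -> : b `^ lam N = (b / a) `^ lam N * a `^ lam N.
  by rewrite -powRM ?ltW // divfK ?gt_eqF.
by field; rewrite !gt_eqF ?powR_gt0.
Qed.

Lemma BF_eq_BF0_Mult i (S : {set 'I_n}) : i \in S ->
  BF P v lam vN i S = BF0 P v lam vN S * Mult v lam (pblock P i) S.
Proof.
move=> iS; set N := pblock P i.
have iN : i \in N := mem_pblock_nest i.
have iNS : i \in N :&: S by rewrite inE iN iS.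
have iNT : i \in N :&: [set: 'I_n] by rewrite setIT.
have := vNS_gt0 (pblock_nest i) iNS; have := vNS_gt0 (pblock_nest i) iNT.
have := sum_weight_gt0 weight_gt0 iNS; have := sum_weight_gt0 weight_gt0 iN.
have := denom_gt0 S; have := denom_gt0 setT; have := weight_gt0 i.
rewrite /BF /BF0 /phi /phi0 setIT -/N -(vNS_ratio_Mult (pblock_nest i) iNS).
by move=> *; field; rewrite !gt_eqF.
Qed.

Lemma BF_eq_BF0 i (S : {set 'I_n}) : i \in S -> pblock P i \subset S ->
  BF P v lam vN i S = BF0 P v lam vN S.
Proof.
move=> iS NS; rewrite BF_eq_BF0_Mult //.
by rewrite (Mult_subset _ weight_gt0 (mem_pblock_nest i) NS) mulr1.
Qed.

Lemma eq_BF_of_eq_pblock i j (S : {set 'I_n}) : i \in S -> j \in S ->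
  pblock P i = pblock P j -> BF P v lam vN i S = BF P v lam vN j S.
Proof. by move=> iS jS Nij; rewrite !BF_eq_BF0_Mult // Nij. Qed.

Hypothesis A1 : Assumption1 P lam.

Lemma nest_lam_lt1 (N : {set 'I_n}) : N \in P -> (1 < #|N|)%N -> lam N < 1.
Proof.
move=> NP N_gt1; have [_ [_ [/(_ N NP)/andP[_ lam_le1] _]]] := model.
rewrite lt_neqAle lam_le1 andbT; apply: contraTneq N_gt1.
by move=> /(A1 NP) ->.
Qed.

Lemma Mult_pblock_gt1 i (S : {set 'I_n}) : i \in S -> ~~ (pblock P i \subset S) ->
  1 < Mult v lam (pblock P i) S.
Proof.
move=> iS N_notsub; have [k kN kS] := subsetPn N_notsub.
have N_gt1 : (1 < #|pblock P i|)%N.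
  apply/card_gt1P; exists i, k; split=> //; first exact: mem_pblock_nest.
  by apply: contraNneq kS => <-.
have N_meets_S : pblock P i :&: S != set0.
  by apply/set0Pn; exists i; rewrite inE mem_pblock_nest iS.
by apply: (Mult_gt1 weight_gt0 (nest_lam_lt1 (pblock_nest i) N_gt1) N_meets_S).
Qed.

Lemma BF0_lt_BF i (S : {set 'I_n}) : i \in S -> ~~ (pblock P i \subset S) ->
  BF0 P v lam vN S < BF P v lam vN i S.
Proof.
move=> iS N_notsub; rewrite BF_eq_BF0_Mult // -{1}(mulr1 (BF0 _ _ _ _ S)).
by rewrite ltr_pM2l ?BF0_gt0 ?Mult_pblock_gt1.
Qed.

Variables (b : nat) (sigma : 'I_n -> {ffun 'I_(Lb b n) -> 'I_b}).
Hypothesis A2 : Assumption2 P v lam sigma.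

Lemma eq_pblock_of_eq_BF (S : {set 'I_n}) i j : in_Sfam sigma S -> i \in S -> j \in S ->
  ~~ (pblock P i \subset S) ->
  BF P v lam vN i S = BF P v lam vN j S -> pblock P i = pblock P j.
Proof.
move=> HS iS jS Ni_notsub; rewrite !BF_eq_BF0_Mult //.
move=> /(mulfI (lt0r_neq0 (BF0_gt0 S))) Mult_eq.
have [Nj_sub | Nj_notsub] := boolP (pblock P j \subset S).
  have := Mult_pblock_gt1 iS Ni_notsub.
  by rewrite Mult_eq (Mult_subset _ weight_gt0 (mem_pblock_nest j) Nj_sub) ltxx.
have meets k : k \in S -> pblock P k :&: S != set0.
  by move=> kS; apply/set0Pn; exists k; rewrite inE mem_pblock_nest kS.
have not_inside k : ~~ (pblock P k \subset S) -> pblock P k :&: S != pblock P k.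
  by apply: contra => /eqP <-; exact: subsetIr.
apply/eqP; apply: contraT => Nij.
have := A2 HS (pblock_nest i) (pblock_nest j) Nij (meets i iS)
  (not_inside i Ni_notsub) (meets j jS) (not_inside j Nj_notsub).
by rewrite Mult_eq eqxx.
Qed.

End NestedLogit.

Theorem proposition4p4 (R : realType) (n b : nat) (n_ge2 : (2 <= n)%N) (b_ge2 : (2 <= b)%N)
  (sigma : 'I_n -> {ffun 'I_(Lb b n) -> 'I_b}) (sigma_inj : injective sigma)
  (P : {set {set 'I_n}}) (v : 'I_n -> R) (lam : {set 'I_n} -> R) (vN : {set 'I_n} -> R)
  (model : NL_model P v lam vN)
  (A1 : Assumption1 P lam)
  (A2 : Assumption2 P v lam sigma)
  (S : {set 'I_n}) (HS : in_Sfam sigma S) :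
  let BFi := BF P v lam vN in
  let BFo := BF0 P v lam vN in
  let N := pblock P in
  (* (I) and (II) *)
  (forall i, i \in S ->
     (N i \subset S -> BFi i S = BFo S) /\
     (~~ (N i \subset S) ->
        BFo S < BFi i S /\
        (forall j, j \in S -> j != i -> (N i = N j <-> BFi i S = BFi j S)))) /\
  (* (a) *)
  (forall i, i \in S -> BFi i S = BFo S -> forall k, k \notin S -> N i != N k) /\
  (* (b) *)
  (forall i j, i \in S -> j \in S -> BFi i S = BFi j S -> BFo S < BFi i S -> N i = N j) /\
  (* (c) *)
  (forall i j, i \in S -> j \in S -> BFi i S != BFi j S -> N i != N j).
Proof.
move=> BFi BFo N.
have BFo_lt := BF0_lt_BF model A1.
have BF_BFo := BF_eq_BF0 model.
have BF_same := eq_BF_of_eq_pblock model.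
have nest_of_BF := eq_pblock_of_eq_BF model A1 A2 HS.
split; [|split; [|split]].
- move=> i iS; split; first exact: BF_BFo.
  move=> Ni_notsub; split; first exact: BFo_lt.
  by move=> j jS _; split; [exact: BF_same | exact: nest_of_BF].
- move=> i iS BF_eq k kS; apply/eqP => Nik.
  have kNi : k \in N i by rewrite Nik (mem_pblock_nest model).
  have : BFo S < BFi i S.
    by apply: BFo_lt iS _; apply/subsetPn; exists k.
  by rewrite BF_eq ltxx.
- move=> i j iS jS BF_eq BFo_lt_BFi.
  have Ni_notsub : ~~ (N i \subset S).
    by apply: contraTN BFo_lt_BFi => Ni_sub; rewrite /BFi BF_BFo // ltxx.
  exact: nest_of_BF iS jS Ni_notsub BF_eq.
- move=> i j iS jS; apply: contra => /eqP Nij.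
  by apply/eqP; exact: BF_same.
Qed.
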